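(* Fix $H\in(3/4,1)$, $\mu\in\mathbb{R}$, $\sigma>0$. For $\alpha>0$ let $Q^{\alpha}$ be the law on $\mathcal{C}[0,1]$ of $\alpha Z^H_t+B_t$, $t\in[0,1]$, where $B$ is a standard Brownian motion and $Z^H$ an independent fractional Brownian motion with Hurst parameter $H$, and let $Q_{\mu\alpha/\sigma}$ be the law on $\mathcal{C}[0,1]$ of $W_t-\frac{\mu\alpha}{\sigma}t$, $W$ a standard Brownian motion. For $n\ge1$ let $Y_n(\omega)=(\omega(\tfrac1n)-\omega(0),\dots,\omega(1)-\omega(\tfrac{n-1}n))^T$ and let $Q^{\alpha,n}$, $Q^n_{\mu\alpha/\sigma}$ be the restrictions of $Q^\alpha$, $Q_{\mu\alpha/\sigma}$ to $\sigma(Y_n)$. Then for every $n>1$, $$\lim_{\alpha\to\infty}H\big(Q^{\alpha,n}\,|\,Q^n_{\mu\alpha/\sigma}\big)=\infty.$$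
   Context: $H(Q_1|Q_2)$ denotes the relative entropy of $Q_1$ with respect to $Q_2$: the supremum over finite measurable partitions $\{F_j\}$ of $\sum_j Q_1(F_j)\ln(Q_1(F_j)/Q_2(F_j))$; when $Q_1\ll Q_2$ it equals $E_{Q_1}[\ln\frac{dQ_1}{dQ_2}]$. A fractional Brownian motion with Hurst parameter $H$ is a continuous centred Gaussian process with covariance $\frac12(t^{2H}+s^{2H}-|t-s|^{2H})$. *)

From HB Require Import structures.
From mathcomp Require Import all_boot all_order all_algebra.
From mathcomp Require Import all_classical all_reals all_analysis.
Set Implicit Arguments. Unset Strict Implicit. Unset Printing Implicit Defensive.
Import Order.TTheory GRing.Theory Num.Theory numFieldNormedType.Exports.
Local Open Scope classical_set_scope.
Local Open Scope ring_scope.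

Section defs.
Context {R : realType} {d : measure_display} {Omega : measurableType d}.

Definition centred_normal_law (v : R) : set R -> \bar R :=
  if v == 0 then \d_(0:R) else normal_prob 0 (Num.sqrt v).

Definition is_centred_normal (P : probability Omega R) (Y : Omega -> R) (v : R) :=
  measurable_fun setT Y /\
  forall A : set R, measurable A -> P (Y @^-1` A) = centred_normal_law v A.

Definition cont_centred_gaussian_process (P : probability Omega R)
    (X : R -> Omega -> R) (K : R -> R -> R) :=
  (forall w, {within `[(0:R), 1]%classic, continuous (fun t => X t w)}) /\
  forall (k : nat) (t : 'I_k -> R) (c : 'I_k -> R),
    (forall i, t i \in `[0, 1]) ->
    is_centred_normal P (fun w => \sum_(i < k) c i * X (t i) w)
      (\sum_(i < k) \sum_(j < k) c i * c j * K (t i) (t j)).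

Definition bm_cov (s t : R) : R := Num.min s t.
Definition fbm_cov (H : R) (s t : R) : R :=
  (s `^ (2 * H) + t `^ (2 * H) - `|t - s| `^ (2 * H)) / 2.

Definition is_standard_BM P X := cont_centred_gaussian_process P X bm_cov.
Definition is_fBM P (H : R) X := cont_centred_gaussian_process P X (fbm_cov H).

(* independence of the processes X and Y (on the generating pi-system of
   finite-dimensional cylinder sets of their natural sigma-algebras) *)
Definition indep_processes (P : probability Omega R) (X Y : R -> Omega -> R) :=
  forall (k : nat) (t : 'I_k -> R) (A C : 'I_k -> set R),
    (forall i, t i \in `[0, 1]) ->
    (forall i, measurable (A i)) -> (forall i, measurable (C i)) ->
    P ([set w | forall i, A i (X (t i) w)] `&` [set w | forall i, C i (Y (t i) w)])
    = (P [set w | forall i, A i (X (t i) w)] * P [set w | forall i, C i (Y (t i) w)])%E.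

End defs.

Definition incr_vec {R : realType} (n : nat) (f : R -> R) : 'I_n -> R :=
  fun i => f (i.+1%:R / n%:R) - f (i%:R / n%:R).

Definition boxes {R : realType} (n : nat) : set (set ('I_n -> R)) :=
  [set B | exists a b : 'I_n -> R, B = [set x | forall i, a i < x i <= b i]].
Definition borel_Rn {R : realType} (n : nat) : set (set ('I_n -> R)) :=
  <<s (@boxes R n) >>.

Definition kl_term {R : realType} (q1 q2 : R) : \bar R :=
  if q1 == 0 then 0%E else if q2 == 0 then +oo%E else (q1 * ln (q1 / q2))%:E.

Definition rel_entropy {T : Type} {R : realType} (G : set (set T))
    (Q1 Q2 : set T -> \bar R) : \bar R :=
  ereal_sup [set s | exists (m : nat) (F : 'I_m -> set T),
    (forall j, G (F j)) /\
    (forall j1 j2, j1 != j2 -> F j1 `&` F j2 = set0) /\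
    (\bigcup_(j in setT) F j = setT) /\
    s = (\sum_(j < m) kl_term (fine (Q1 (F j))) (fine (Q2 (F j))))%E].

From HB Require Import structures.
From mathcomp Require Import all_boot all_order all_algebra.
From mathcomp Require Import all_classical all_reals all_analysis.
From mathcomp Require Import ring lra.
Import Order.TTheory GRing.Theory Num.Theory numFieldNormedType.Exports.
Local Open Scope classical_set_scope.
Local Open Scope ring_scope.

(* It suffices to look at the first increment, i.e. at the two-cell partition
   {S, ~S} of R^n where S is a strip of fixed half-width r in the first
   coordinate around the mean -mu alpha / (sigma n) of the first increment
   under Q_{mu alpha / sigma}.  Brownian increments are tight, so for r large
   that law gives S mass at least 1 - eps uniformly in alpha.  Under Q^alpha
   the first increment is alpha U + V with U a nondegenerate Gaussian, hence
   without atoms: for alpha large, alpha U + V lies in S with probability at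
   most 1/2.  The partition then bounds the relative entropy below by
   (1/2) ln (1 / (2 eps)) - 1. *)

Section probability_small_sets.
Context {R : realType} {d : measure_display} {T : measurableType d}.
Variable P : probability T R.

Lemma measurable_set_ltr (f g : T -> R) :
  measurable_fun setT f -> measurable_fun setT g -> measurable [set w | f w < g w].
Proof.
move=> mf mg; have := measurable_realfun.measurable_fun_ltr mf mg measurableT.
by move=> /(_ [set true] I); rewrite setTI.
Qed.

Lemma measurable_set_ler (f g : T -> R) :
  measurable_fun setT f -> measurable_fun setT g -> measurable [set w | f w <= g w].
Proof.
move=> mf mg; have := measurable_realfun.measurable_fun_ler mf mg measurableT.
by move=> /(_ [set true] I); rewrite setTI.
Qed.

Lemma measurable_set_itv (f : T -> R) (i : interval R) :
  measurable_fun setT f -> measurable [set w | f w \in i].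
Proof. by move=> mf; have := mf measurableT _ (measurable_itv i); rewrite setTI. Qed.

Lemma nonincreasing_bigcap0_small {F : nat -> set T} {eps : R} :
  (forall k, measurable (F k)) -> nonincreasing_seq F -> P (\bigcap_k F k) = 0%E ->
  0 < eps -> exists k, (P (F k) <= eps%:E)%E.
Proof.
move=> mF niF P0 eps0.
have F0fin : (P (F 0%N) < +oo)%E by rewrite ltey_eq fin_num_measure.
have := nonincreasing_cvg_mu F0fin mF (bigcapT_measurable mF) niF.
set l := (X in _ --> X); have -> : l = 0%E by exact: P0.
move=> /fine_cvg /cvgr_lt /(_ eps eps0) [N _ /(_ N (leqnn N)) /= PN].
by exists N; rewrite -(fineK (fin_num_measure _ _ (mF N))) lee_fin ltW.
Qed.

Lemma prob_tail_small {f : T -> R} {eps : R} : measurable_fun setT f -> 0 < eps ->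
  exists K : R, (P [set w | (K < `|f w|)%R] <= eps%:E)%E.
Proof.
move=> mf eps0.
suff [k Pk] : exists k, (P [set w | (k%:R < `|f w|)%R] <= eps%:E)%E by exists k%:R.
apply: nonincreasing_bigcap0_small eps0.
- by move=> k; apply: measurable_set_ltr; [exact: measurable_cst | exact: measurableT_comp].
- apply/nonincreasing_seqP => k; apply/subsetPset => w /=.
  by apply: le_lt_trans; rewrite ler_nat.
- rewrite (_ : \bigcap_k _ = set0) ?measure0 //; apply/seteqP; split => // w /= fw.
  by have := lt_trans (truncnS_gt `|f w|) (fw _ I); rewrite ltxx.
Qed.

Lemma prob_near_atomless_small {f : T -> R} {c eps : R} : measurable_fun setT f ->
  P [set w | f w = c] = 0%E -> 0 < eps ->
  exists2 delta : R, 0 < delta & (P [set w | (`|f w - c| <= delta)%R] <= eps%:E)%E.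
Proof.
move=> mf Pc eps0.
suff [k Pk] : exists k, (P [set w | (`|f w - c| <= k.+1%:R^-1)%R] <= eps%:E)%E.
  by exists k.+1%:R^-1.
apply: nonincreasing_bigcap0_small eps0.
- move=> k; apply: measurable_set_ler; last exact: measurable_cst.
  by apply: measurableT_comp => //; exact: measurable_realfun.measurable_funB.
- apply/nonincreasing_seqP => k; apply/subsetPset => w /= /le_trans; apply.
  by rewrite lef_pV2 ?posrE // ler_nat.
- rewrite -Pc; congr (P _); apply/seteqP; split => w /= fw; last first.
    by move=> k _ /=; rewrite fw subrr normr0 invr_ge0.
  apply/eqP; apply: contraT => fwc.
  have dpos : 0 < `|f w - c| by rewrite normr_gt0 subr_eq0.
  have := truncnS_gt `|f w - c|^-1; rewrite invf_plt ?posrE ?ltr0n //.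
  by move=> /(le_lt_trans (fw _ I)); rewrite ltxx.
Qed.

Lemma scaled_sum_strip_small {U V : T -> R} {g eps : R} (r : R) :
  measurable_fun setT U -> measurable_fun setT V -> P [set w | U w = g] = 0%E -> 0 < eps ->
  exists A : R, forall alpha : R, 0 < alpha -> A < alpha ->
    (P [set w | (alpha * U w + V w \in `]alpha * g - r, alpha * g + r])%R] <= eps%:E)%E.
Proof.
move=> mU mV Ug eps0.
have eps20 : 0 < eps / 2 by rewrite divr_gt0.
have [del del0 Pdel] := prob_near_atomless_small mU Ug eps20.
have [K PK] := prob_tail_small mV eps20.
exists ((r + K) / del) => alpha alpha0; rewrite ltr_pdivrMr // => rK_lt.
have mUg : measurable [set w | `|U w - g| <= del].
  apply: measurable_set_ler; last exact: measurable_cst.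
  by apply: measurableT_comp => //; exact: measurable_realfun.measurable_funB.
have mVK : measurable [set w | K < `|V w|].
  by apply: measurable_set_ltr; [exact: measurable_cst | exact: measurableT_comp].
apply: (@le_trans _ _ (P ([set w | `|U w - g| <= del] `|` [set w | K < `|V w|]))).
  apply: le_measure; rewrite ?inE; last 1 first.
  - move=> w; rewrite /= in_itv /= => /andP[lo hi].
    have [Unear|Ufar] := leP `|U w - g| del; first by left.
    have [Vfar|] := ltP K `|V w|; first by right.
    rewrite ler_norml => /andP[V_ge V_le]; exfalso.
    move: Ufar; rewrite ltr_normr => /orP[]; rewrite -(ltr_pM2l alpha0) ?mulrN mulrBr; lra.
  - apply: measurable_set_itv; apply: measurable_realfun.measurable_funD => //.
    exact: measurable_realfun.measurable_funM (measurable_cst alpha) mU.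
  - exact: measurableU.
apply: le_trans (measureU2 _ _ _) _ => //.
by rewrite [eps]splitr EFinD leeD.
Qed.

Lemma shifted_strip_tail_small {f : T -> R} {eps : R} :
  measurable_fun setT f -> 0 < eps ->
  exists r : R, forall c : R, (P (~` [set w | (f w + c \in `]c - r, c + r])%R]) <= eps%:E)%E.
Proof.
move=> mf eps0; have [K PK] := prob_tail_small mf eps0.
exists (`|K| + 1) => c; apply: le_trans PK; apply: le_measure; rewrite ?inE.
- apply: measurableC; apply: measurable_set_itv.
  exact: measurable_realfun.measurable_funD mf (measurable_cst c).
- by apply: measurable_set_ltr; [exact: measurable_cst | exact: measurableT_comp].
- move=> w /= fw_out; rewrite ltNge; apply/negP => /ler_normlP[fK1 fK2].
  have KK := ler_norm K; apply: fw_out; rewrite in_itv /=; apply/andP; split; lra.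
Qed.
End probability_small_sets.

Section gaussian_increments.
Context {R : realType} {d : measure_display} {T : measurableType d}.
Variable P : probability T R.

Lemma gaussian_process_measurable {X : R -> T -> R} {K : R -> R -> R} {t : R} :
  cont_centred_gaussian_process P X K -> t \in `[0, 1] -> measurable_fun setT (X t).
Proof.
move=> [_ fdd] t01; have [mX _] := fdd 1%N (fun=> t) (fun=> 1) (fun=> t01).
by move: mX; congr measurable_fun; apply/funext => w; rewrite big_ord1 mul1r.
Qed.

Lemma gaussian_process_increment_measurable {X : R -> T -> R} {K : R -> R -> R} {t : R} :
  cont_centred_gaussian_process P X K -> t \in `[0, 1] ->
  measurable_fun setT (fun w => X t w - X 0 w).
Proof.
move=> XK t01; have i0 : (0 : R) \in `[0, 1] by rewrite in_itv /= lexx ler01.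
by apply: measurable_realfun.measurable_funB; exact: gaussian_process_measurable XK _.
Qed.

Lemma centred_normal_atomless {Y : T -> R} {v : R} (c : R) :
  is_centred_normal P Y v -> 0 < v -> P [set w | Y w = c] = 0%E.
Proof.
move=> [_ lawY] v0; rewrite -[X in P X]/(Y @^-1` [set c]) lawY //.
rewrite /centred_normal_law gt_eqF //.
apply: (null_content_dominatesP _ _).1 (@normal_prob_dominates R 0 (Num.sqrt v)) _ _ _ => //.
exact: lebesgue_measure_set1.
Qed.

Lemma fBM_increment_normal {H a : R} {Z : R -> T -> R} :
  0 < H -> is_fBM P H Z -> a \in `[0, 1] ->
  is_centred_normal P (fun w => Z a w - Z 0 w) (a `^ (2 * H)).
Proof.
move=> H0 [_ fdd] a01.
pose t (i : 'I_2) := if i == ord0 then a else 0.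
pose c (i : 'I_2) := if i == ord0 then 1 else -1 : R.
have t01 i : t i \in `[0, 1] by rewrite /t; case: ifP => // _; rewrite in_itv /= lexx ler01.
have [mZ lawZ] := fdd 2%N t c t01.
have incrE : (fun w => \sum_(i < 2) c i * Z (t i) w) = (fun w => Z a w - Z 0 w).
  by apply/funext => w; rewrite !big_ord_recl big_ord0 /c /t /= mul1r mulN1r addr0.
rewrite incrE in mZ lawZ; split => // A mA; rewrite (lawZ _ mA); congr centred_normal_law.
have a0 : 0 <= a by move: a01; rewrite in_itv /= => /andP[].
have H20 : 2 * H != 0 by rewrite mulf_neq0 // gt_eqF.
rewrite !big_ord_recl !big_ord0 /c /t /= /fbm_cov !subrr !normr0 !powR0 //.
by rewrite sub0r normrN !subr0 ger0_norm //; lra.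
Qed.
End gaussian_increments.

Section kl_term_bounds.
Context {R : realType}.

Lemma subr1_le_mul_ln (x : R) : 0 < x -> x - 1 <= x * ln x.
Proof.
move=> x0; have xV : 0 < x^-1 by rewrite invr_gt0.
have x1 : -1 < x^-1 - 1 by lra.
have := le_ln1Dx x1; rewrite subrKC lnV ?posrE // => lnx_ge.
have lnx : 1 - x^-1 <= ln x by lra.
by have := ler_wpM2l (ltW x0) lnx; rewrite mulrBr mulr1 mulfV ?gt_eqF.
Qed.

Lemma kl_term_ge_N1 (p q : R) : 0 <= p -> 0 <= q <= 1 -> ((-1)%:E <= kl_term p q)%E.
Proof.
move=> p0 /andP[q0 q1]; rewrite /kl_term.
case: eqP => [_|/eqP pn0]; first by rewrite lee_fin lerN10.
case: eqP => [_|/eqP qn0]; first by rewrite leey.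
have pp : 0 < p by rewrite lt_def pn0.
have qp : 0 < q by rewrite lt_def qn0.
rewrite lee_fin; have := subr1_le_mul_ln _ pp.
have : p * ln p <= p * ln (p / q).
  by rewrite ler_wpM2l ?ler_ln ?posrE ?divr_gt0 // ler_pdivlMr // ler_piMr.
lra.
Qed.

Lemma kl_term_ge_of_small_rhs (c p q : R) : 0 <= c -> 1 / 2 <= p -> 0 <= q ->
  q <= expR (- (2 * c)) / 2 -> (c%:E <= kl_term p q)%E.
Proof.
move=> c0 p_ge q0 q_le; rewrite /kl_term.
have pp : 0 < p by apply: lt_le_trans p_ge; lra.
rewrite gt_eqF //; case: eqP => [_|/eqP qn0]; first by rewrite leey.
have qp : 0 < q by rewrite lt_def qn0.
have ln_ge : 2 * c <= ln (p / q).
  rewrite -[leLHS]expRK ler_ln ?posrE ?expR_gt0 ?divr_gt0 // ler_pdivlMr //.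
  have := ler_wpM2l (ltW (expR_gt0 (2 * c))) q_le.
  rewrite mulrA -expRD addrN expR0 mul1r; lra.
have ln0 : 0 <= ln (p / q) by apply: le_trans ln_ge; lra.
by rewrite lee_fin; have := ler_wpM2r ln0 p_ge; lra.
Qed.
End kl_term_bounds.

Lemma rel_entropy_ge_split {T : Type} {R : realType} (G : set (set T))
    (Q1 Q2 : set T -> \bar R) (S : set T) : G S -> G (~` S) ->
  (kl_term (fine (Q1 (~` S))) (fine (Q2 (~` S))) + kl_term (fine (Q1 S)) (fine (Q2 S))
    <= rel_entropy G Q1 Q2)%E.
Proof.
move=> GS GSc; apply: ereal_sup_ubound.
exists 2%N, (fun j : 'I_2 => if j == ord0 then ~` S else S); split; last split; last split.
- by move=> j; case: ifP.
- move=> [[|[|j1]] ? ] [[|[|j2]] ?] //= _; rewrite ?setICl ?setICr //.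
- apply/seteqP; split => // x _.
  by have [Sx|nSx] := pselect (S x); [exists ord_max | exists ord0].
- by rewrite big_ord_recl big_ord1.
Qed.

Section fine_probability.
Context {R : realType} {d : measure_display} {T : measurableType d}.
Variable P : probability T R.

Lemma fine_probability_ge0 {A : set T} : measurable A -> 0 <= fine (P A).
Proof. by move=> mA; rewrite fine_ge0. Qed.

Lemma fine_probability_le {A : set T} {e : R} : measurable A ->
  (P A <= e%:E)%E -> fine (P A) <= e.
Proof. by move=> mA; rewrite -lee_fin fineK ?fin_num_measure. Qed.

Lemma fine_probability_setC {A : set T} : measurable A ->
  fine (P (~` A)) = 1 - fine (P A).
Proof.
by move=> mA; rewrite probability_setC // -[P A](fineK (fin_num_measure P A mA)).
Qed.
End fine_probability.

Lemma kl_pair_ge {R : realType} {d1 d2 : measure_display}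
    {T1 : measurableType d1} {T2 : measurableType d2}
    (P1 : probability T1 R) (P2 : probability T2 R) (A1 : set T1) (A2 : set T2) (c : R) :
  measurable A1 -> measurable A2 -> 0 <= c ->
  (P1 A1 <= (1 / 2)%:E)%E -> (P2 (~` A2) <= (expR (- (2 * c)) / 2)%:E)%E ->
  ((c - 1)%:E <= kl_term (fine (P1 (~` A1))) (fine (P2 (~` A2)))
                 + kl_term (fine (P1 A1)) (fine (P2 A2)))%E.
Proof.
move=> mA1 mA2 c0 P1A1 P2A2; rewrite EFinD; apply: leeD.
- apply: kl_term_ge_of_small_rhs => //.
  + by rewrite fine_probability_setC //; have := fine_probability_le P1 mA1 P1A1; lra.
  + exact/(fine_probability_ge0 P2)/measurableC.
  + exact/(fine_probability_le P2 (measurableC mA2)).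
- apply: kl_term_ge_N1; first exact: fine_probability_ge0.
  by rewrite fine_probability_ge0 // fine_probability_le // probability_le1.
Qed.

Lemma borel_Rn_strip {R : realType} {n : nat} (i0 : 'I_n) (a b : R) :
  @borel_Rn R n [set x | x i0 \in `]a, b]].
Proof.
pose lo k i := if i == i0 then a else - k.+1%:R : R.
pose hi k i := if i == i0 then b else k.+1%:R : R.
have -> : [set x : 'I_n -> R | x i0 \in `]a, b]] =
    \bigcup_k [set x | forall i, lo k i < x i <= hi k i].
  apply/seteqP; split => x /=; last by move=> [k _ /(_ i0)]; rewrite /lo /hi eqxx in_itv.
  move=> xi0; exists (Num.truncn (\sum_j `|x j|)) => // i; rewrite /lo /hi.
  case: eqP => [->|_]; first by rewrite in_itv in xi0.
  have x_le : `|x i| <= \sum_j `|x j| by rewrite (bigD1 i) //= lerDl sumr_ge0.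
  by have := le_lt_trans x_le (truncnS_gt _); rewrite ltr_norml => /andP[-> /ltW ->].
apply: sigma_algebra_bigcup => k; apply: sub_sigma_algebra.
by exists (lo k), (hi k).
Qed.

Lemma incr_vec0 {R : realType} (n : nat) (f : R -> R) :
  @incr_vec R n.+1 f ord0 = f n.+1%:R^-1 - f 0.
Proof. by rewrite /incr_vec /= mul0r div1r. Qed.

Definition first_coord_strip {R : realType} (n : nat) (c r : R) : set ('I_n.+1 -> R) :=
  [set x | x ord0 \in `]c - r, c + r]].

Section first_increment_strips.
Context {R : realType} {d : measure_display} {T : measurableType d}.
Variable P : probability T R.

Lemma drifted_BM_first_coord_strip {n : nat} {W : R -> T -> R} {eps : R} :
  is_standard_BM P W -> 0 < eps ->
  exists r : R, forall a : R,
    let E := [set w | first_coord_strip n (- (a * n.+1%:R^-1)) r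
                        (incr_vec (fun s => W s w - a * s))] in
    measurable E /\ (P (~` E) <= eps%:E)%E.
Proof.
move=> HW eps0; set t : R := n.+1%:R^-1.
have t01 : t \in `[0, 1] by rewrite in_itv /= invr_ge0 ler0n invf_le1 ?ler1n ?ltr0n.
have mW := gaussian_process_increment_measurable P HW t01.
have [r tailW] := shifted_strip_tail_small P mW eps0.
exists r => a E.
have incrW w : @incr_vec R n.+1 (fun s => W s w - a * s) ord0 = W t w - W 0 w + - (a * t).
  by rewrite incr_vec0 -/t; ring.
have -> : E = [set w | W t w - W 0 w + - (a * t) \in `]- (a * t) - r, - (a * t) + r]].
  by apply/funext => w; rewrite /E /first_coord_strip /= incrW.
split; last exact: tailW.
by apply: measurable_set_itv; exact: measurable_realfun.measurable_funD mW (measurable_cst _).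
Qed.

Lemma fBM_BM_first_coord_strip {n : nat} {H : R} {Z B : R -> T -> R} (g r : R) :
  0 < H -> is_fBM P H Z -> is_standard_BM P B ->
  exists A : R, forall alpha : R, 0 < alpha -> A < alpha ->
    let E := [set w | first_coord_strip n (alpha * g) r
                        (incr_vec (fun s => alpha * Z s w + B s w))] in
    measurable E /\ (P E <= (1 / 2)%:E)%E.
Proof.
move=> H0 HZ HB; set t : R := n.+1%:R^-1.
have t0 : 0 < t by rewrite invr_gt0 ltr0n.
have t01 : t \in `[0, 1] by rewrite in_itv /= ltW // invf_le1 ?ler1n ?ltr0n.
have mZ := gaussian_process_increment_measurable P HZ t01.
have mB := gaussian_process_increment_measurable P HB t01.
have Zg : P [set w | Z t w - Z 0 w = g] = 0%E.
  by apply: centred_normal_atomless (fBM_increment_normal P H0 HZ t01) _; rewrite powR_gt0.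
have [|A stripZB] := scaled_sum_strip_small P r mZ mB Zg (_ : 0 < 1 / 2); first lra.
exists A => alpha alpha0 A_lt E.
have incrZB w : @incr_vec R n.+1 (fun s => alpha * Z s w + B s w) ord0
                 = alpha * (Z t w - Z 0 w) + (B t w - B 0 w).
  by rewrite incr_vec0 -/t; ring.
have -> : E = [set w | alpha * (Z t w - Z 0 w) + (B t w - B 0 w)
                         \in `]alpha * g - r, alpha * g + r]].
  by apply/funext => w; rewrite /E /first_coord_strip /= incrZB.
split; last exact: stripZB.
apply: measurable_set_itv; apply: measurable_realfun.measurable_funD => //.
exact: measurable_realfun.measurable_funM (measurable_cst alpha) mZ.
Qed.
End first_increment_strips.

Theorem lemma3p3 (R : realType) (H mu sigma : R)
  (HH : 3 / 4 < H < 1) (Hsigma : 0 < sigma)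
  (d : measure_display) (Omega : measurableType d) (P : probability Omega R)
  (B Z : R -> Omega -> R)
  (HB : is_standard_BM P B) (HZ : is_fBM P H Z) (Hind : indep_processes P B Z)
  (d' : measure_display) (Omega' : measurableType d') (P' : probability Omega' R)
  (W : R -> Omega' -> R) (HW : is_standard_BM P' W)
  (n : nat) (Hn : (1 < n)%N) :
  forall M : R, exists A : R, forall alpha : R, 0 < alpha -> A < alpha ->
    (M%:E <= rel_entropy (@borel_Rn R n)
      (fun S => P [set w | S (@incr_vec R n (fun t => alpha * Z t w + B t w)%R)])
      (fun S => P' [set w | S (@incr_vec R n (fun t => W t w - mu * alpha / sigma * t)%R)]))%E.
Proof.
move=> M; case: n Hn => [|[|n]] // _.
set t : R := n.+2%:R^-1; set g := - (mu / sigma * t).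
have H0 : 0 < H by case/andP: HH => H34 _; apply: lt_trans H34; lra.
set c := `|M| + 1.
have c0 : 0 <= c by rewrite addr_ge0 ?normr_ge0.
have M_le : (M%:E <= (c - 1)%:E)%E by rewrite lee_fin /c addrK ler_norm.
have eps0 : 0 < expR (- (2 * c)) / 2 by rewrite divr_gt0 ?expR_gt0.
have [r tailW] := drifted_BM_first_coord_strip P' (n := n.+1) HW eps0.
have [A stripZB] := fBM_BM_first_coord_strip P (n := n.+1) g r H0 HZ HB.
exists A => alpha alpha0 A_lt.
have [mA1 PA1] := stripZB alpha alpha0 A_lt.
have [mA2 PA2] := tailW (mu * alpha / sigma).
rewrite (_ : - (mu * alpha / sigma * _) = alpha * g) in mA2 PA2; last by rewrite /g /t; ring.
have SB : borel_Rn (first_coord_strip n.+1 (alpha * g) r) := borel_Rn_strip _ _ _.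
apply: le_trans M_le (le_trans (kl_pair_ge P P' _ _ c mA1 mA2 c0 PA1 PA2) _).
exact: rel_entropy_ge_split SB (sigma_algebraC SB).
Qed.
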